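(* Let $(M,s)$ be an $\mathbf{S5}$-state such that every world $u\in M[S]$ is reachable from $s$, let $i$ be an agent and $\psi$ a fluent formula. Then $(M,s)\models\mathbf C(\mathbf B_i\psi\vee\mathbf B_i\neg\psi)$ iff for all $u,v\in M[S]$ with $(u,v)\in M[i]$ we have: $M[\pi](u)\models\psi$ iff $M[\pi](v)\models\psi$.
   Context: Agents $\mathcal{AG}=\{1,\dots,n\}$, fluents $\mathcal F$. Belief formulae are built from propositional (fluent) formulae over $\mathcal F$ with $\mathbf B_i$, Boolean connectives, $\mathbf E_\alpha,\mathbf C_\alpha$; $\mathbf C=\mathbf C_{\mathcal{AG}}$. Kripke structures $M$: worlds $M[S]$, interpretations $M[\pi](u)\subseteq\mathcal F$, relations $M[i]$; standard semantics ($\mathbf B_i\varphi$: $\varphi$ at all $M[i]$-successors; $\mathbf E_\alpha\varphi$: all $\mathbf B_i\varphi$, $i\in\alpha$; $\mathbf C_\alpha\varphi$: $\mathbf E_\alpha^k\varphi$ for all $k\ge0$). $(M,s)$ is an $\mathbf{S5}$-state if each $M[i]$ is an equivalence relation. $v$ is reachable from $u$ if connected to it by a finite (possibly empty) chain of pairs each in some $M[j]$. *)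

From Stdlib Require Import Relations.

Section Logic.
Variables (Ag F : Type).

Inductive fform : Type :=
| FAtom : F -> fform
| FTrue : fform
| FNot : fform -> fform
| FAnd : fform -> fform -> fform
| FOr : fform -> fform -> fform.

Fixpoint fsat (I : F -> Prop) (p : fform) : Prop :=
  match p with
  | FAtom f => I f
  | FTrue => True
  | FNot q => ~ fsat I q
  | FAnd q r => fsat I q /\ fsat I r
  | FOr q r => fsat I q \/ fsat I r
  end.

(* Belief formulae; groups alpha are given as predicates on agents. *)
Inductive bform : Type :=
| BFl : fform -> bform
| BNot : bform -> bform
| BAnd : bform -> bform -> bform
| BOr : bform -> bform -> bform
| BB : Ag -> bform -> bform
| BE : (Ag -> Prop) -> bform -> bform
| BC : (Ag -> Prop) -> bform -> bform.

Record kripke : Type := Kripke {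
  kS : Type;
  kpi : kS -> F -> Prop;
  krel : Ag -> kS -> kS -> Prop
}.

Fixpoint Eiter (M : kripke) (al : Ag -> Prop) (k : nat) (P : kS M -> Prop)
  (u : kS M) : Prop :=
  match k with
  | O => P u
  | S k' => forall i, al i -> forall v, krel M i u v -> Eiter M al k' P v
  end.

Fixpoint models (M : kripke) (u : kS M) (phi : bform) : Prop :=
  match phi with
  | BFl p => fsat (kpi M u) p
  | BNot q => ~ models M u q
  | BAnd q r => models M u q /\ models M u r
  | BOr q r => models M u q \/ models M u r
  | BB i q => forall v, krel M i u v -> models M v q
  | BE al q => forall i, al i -> forall v, krel M i u v -> models M v q
  | BC al q => forall k, Eiter M al k (fun v => models M v q) u
  end.

Definition BCall (phi : bform) : bform := BC (fun _ => True) phi.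

Definition S5_state (M : kripke) (s : kS M) : Prop :=
  forall i, equivalence (kS M) (krel M i).

Definition anyrel (M : kripke) (u v : kS M) : Prop := exists j, krel M j u v.

Definition reachable (M : kripke) (u v : kS M) : Prop :=
  clos_refl_trans (kS M) (anyrel M) u v.

End Logic.

Arguments FAtom {F}. Arguments FTrue {F}. Arguments FNot {F}.
Arguments FAnd {F}. Arguments FOr {F}.
Arguments BFl {Ag F}. Arguments BNot {Ag F}. Arguments BAnd {Ag F}.
Arguments BOr {Ag F}. Arguments BB {Ag F}. Arguments BE {Ag F}. Arguments BC {Ag F}.
Arguments BCall {Ag F}.
Arguments models {Ag F}. Arguments S5_state {Ag F}. Arguments reachable {Ag F}.
Arguments kS {Ag F}. Arguments kpi {Ag F}. Arguments krel {Ag F}.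

(* Common belief among all agents at s amounts to truth at every world reachable
   from s, hence, when every world is reachable, to validity in M.  And
   [B_i psi \/ B_i ~psi] is valid in a model with reflexive [M[i]] exactly when
   [M[i]] never relates a psi-world to a ~psi-world: reflexivity gives one
   direction, and a case split on psi at the current world gives the other. *)
From Stdlib Require Import Relations Classical.

Section CommonBelief.
Variables (Ag F : Type) (M : kripke Ag F).

Notation everyone := (fun _ : Ag => True).

Lemma Eiter_of_forall (al : Ag -> Prop) (P : kS M -> Prop) :
  (forall w, P w) -> forall k w, Eiter Ag F M al k P w.
Proof. intros HP k; induction k; simpl; auto. Qed.

Lemma common_Eiter_anyrel (P : kS M -> Prop) u v :
  anyrel Ag F M u v ->
  (forall k, Eiter Ag F M everyone k P u) -> forall k, Eiter Ag F M everyone k P v.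
Proof. intros [j Hj] HC k. exact (HC (S k) j I v Hj). Qed.

Lemma common_Eiter_reachable (P : kS M -> Prop) u v :
  reachable M u v ->
  (forall k, Eiter Ag F M everyone k P u) -> forall k, Eiter Ag F M everyone k P v.
Proof.
  induction 1; auto.
  apply common_Eiter_anyrel; assumption.
Qed.

Lemma models_BCall_iff_valid (s : kS M) (phi : bform Ag F) :
  (forall u, reachable M s u) ->
  models M s (BCall phi) <-> (forall u, models M u phi).
Proof.
  intros Hreach; split.
  - intros HC u. exact (common_Eiter_reachable _ s u (Hreach u) HC 0).
  - intros Hvalid k. exact (Eiter_of_forall _ _ Hvalid k s).
Qed.

Lemma valid_B_or_B_not_iff (i : Ag) (psi : fform F) :
  reflexive (kS M) (krel M i) ->
  (forall u, models M u (BOr (BB i (BFl psi)) (BB i (BFl (FNot psi)))))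
  <-> (forall u v, krel M i u v ->
         (fsat F (kpi M u) psi <-> fsat F (kpi M v) psi)).
Proof.
  intros Hrefl; split.
  - intros Hvalid u v Huv; simpl in Hvalid.
    destruct (Hvalid u) as [Hpsi | Hnpsi].
    + split; intros _; auto.
    + pose proof (Hnpsi u (Hrefl u)); pose proof (Hnpsi v Huv); tauto.
  - intros Hinv u; simpl.
    destruct (classic (fsat F (kpi M u) psi)) as [Hu | Hu].
    + left; intros v Huv. exact (proj1 (Hinv u v Huv) Hu).
    + right; intros v Huv Hv. exact (Hu (proj2 (Hinv u v Huv) Hv)).
Qed.

End CommonBelief.

Theorem lemma9 (Ag F : Type) (M : kripke Ag F) (s : kS M)
  (HS5 : S5_state M s)
  (Hreach : forall u : kS M, reachable M s u)
  (i : Ag) (psi : fform F) :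
  models M s (BCall (BOr (BB i (BFl psi)) (BB i (BFl (FNot psi)))))
  <-> (forall u v : kS M, krel M i u v ->
         (fsat F (kpi M u) psi <-> fsat F (kpi M v) psi)).
Proof.
  rewrite models_BCall_iff_valid by exact Hreach.
  apply valid_B_or_B_not_iff.
  exact (equiv_refl _ _ (HS5 i)).
Qed.
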